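(* Let $\Omega\subset\mathbb{R}^2$ have property (i). Then: 1. $\Omega$ has property $( * )$ if and only if $\Omega^\diamond$ has property $( ** )$. 2. $\Omega^\diamond$ has property $( * )$ if and only if $\Omega$ has property $( ** )$.
   Context: Points of $\mathbb{R}^2$ are written $(x,y)$, points of the dual $\mathbb{R}^{2*}$ as $(p,q)$. The antipolar of $\Omega\subset\mathbb{R}^2$ is $\Omega^\diamond=\{(p,q)\in\mathbb{R}^{2*}: px-qy\ge1\ \forall(x,y)\in\Omega\}$. For a set $\Sigma$ (in $\mathbb{R}^2$ or in $\mathbb{R}^{2*}$): property (i): $\Sigma$ is nonempty, convex, closed, $0\notin\Sigma$, and $\lambda\Sigma\subset\Sigma$ for all $\lambda>1$. Property $( * )$: $\lambda\Sigma\cap\partial\Sigma=\varnothing$ for all $\lambda>1$ (no ray issued from the origin lies on $\partial\Sigma$). Property $( ** )$: letting $C=\operatorname{cl}(\mathbb{R}_+\Sigma)$ with $\mathbb{R}_+=[0,\infty)$, and $\partial C=l_0\cup l_1$ with $l_0,l_1$ the two (possibly coinciding) boundary rays of the closed cone $C$, one has $\operatorname{dist}(l_0,\Sigma)=\operatorname{dist}(l_1,\Sigma)=0$. *)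

(* concrete reals R; R^2 and its dual both modelled as R * R. *)
From Stdlib Require Import Reals.
Open Scope R_scope.

Definition pt := (R * R)%type.
Definition pset := pt -> Prop.

Definition edist (a b : pt) : R :=
  sqrt ((fst a - fst b)^2 + (snd a - snd b)^2).

Definition scal (l : R) (a : pt) : pt := (l * fst a, l * snd a).

Definition closure (S : pset) : pset :=
  fun a => forall eps, 0 < eps -> exists b, S b /\ edist a b < eps.
Definition interior (S : pset) : pset :=
  fun a => exists eps, 0 < eps /\ forall b, edist a b < eps -> S b.
Definition boundary (S : pset) : pset :=
  fun a => closure S a /\ ~ interior S a.
Definition is_closed (S : pset) : Prop := forall a, closure S a -> S a.

Definition is_convex (S : pset) : Prop :=
  forall a b t, S a -> S b -> 0 <= t <= 1 ->
    S (t * fst a + (1 - t) * fst b, t * snd a + (1 - t) * snd b).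

Definition scale_set (l : R) (S : pset) : pset :=
  fun a => exists s, S s /\ a = scal l s.

Definition cone_hull (S : pset) : pset :=
  fun a => exists l s, 0 <= l /\ S s /\ a = scal l s.

Definition ray (d : pt) : pset := fun a => exists t, 0 <= t /\ a = scal t d.

(* dist(A, B) = inf { |a - b| : a in A, b in B } = 0, unfolded *)
Definition dist_zero (A B : pset) : Prop :=
  forall eps, 0 < eps -> exists a b, A a /\ B b /\ edist a b < eps.

Definition antipolar (Om : pset) : pset :=
  fun pq => forall xy, Om xy -> fst pq * fst xy - snd pq * snd xy >= 1.

Definition prop_i (S : pset) : Prop :=
  (exists a, S a) /\ is_convex S /\ is_closed S /\ ~ S (0, 0) /\
  (forall l, l > 1 -> forall a, scale_set l S a -> S a).

Definition prop_star (S : pset) : Prop :=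
  forall l, l > 1 -> forall a, ~ (scale_set l S a /\ boundary S a).

Definition prop_starstar (S : pset) : Prop :=
  exists d0 d1 : pt, d0 <> (0, 0) /\ d1 <> (0, 0) /\
    (forall a, boundary (closure (cone_hull S)) a <-> (ray d0 a \/ ray d1 a)) /\
    dist_zero (ray d0) S /\ dist_zero (ray d1) S.

(* By a separation argument, [antipolar Om] again has property (i) and
   [antipolar (antipolar Om) = Om], so part 2 is part 1 applied to [antipolar Om].

   The closed cone generated by [antipolar Om] is the dual cone
   K = { phi | pairing phi z >= 0 on Om }, a closed convex cone of the plane
   which is neither {0} nor the whole plane, so its boundary consists of two
   (possibly equal) rays.  If Om has (star), every nonzero phi in K is positive
   on Om.  For phi on a boundary ray, a large multiple of phi (bounded below on
   bounded parts of Om, by compactness) plus a small multiple of an interior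
   point of K (which grows like |z| on Om) lies in [antipolar Om] and is close
   to the ray.

   Conversely, if a = l s with l > 1, s in Om, lies on the boundary of Om, the
   functionals of [antipolar Om] cannot stay uniformly away from being
   orthogonal to a, so K contains some w <> 0 with pairing w a = 0.  Such a w
   lies on the boundary of K, hence on one of the two rays, and that ray stays
   at positive distance from [antipolar Om], on which pairing _ a >= 1. *)

From Stdlib Require Import Reals Lra Lia Classical FunctionalExtensionality PropExtensionality IndefiniteDescription.
Open Scope R_scope.

(* [antipolar Om psi] unfolds to [forall z, Om z -> pairing psi z >= 1]. *)
Definition pairing (a b : pt) : R := fst a * fst b - snd a * snd b.
Definition norm2 (a : pt) : R := fst a ^ 2 + snd a ^ 2.
Definition dist2 (a b : pt) : R := (fst a - fst b) ^ 2 + (snd a - snd b) ^ 2.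
Definition lin (a : R) (u : pt) (b : R) (v : pt) : pt :=
  (a * fst u + b * fst v, a * snd u + b * snd v).
Definition det (u v : pt) : R := fst u * snd v - snd u * fst v.

Ltac pt_eq :=
  repeat match goal with p : pt |- _ => destruct p end;
  unfold lin, scal; simpl; f_equal; field; try assumption; try (intro; lra).

Lemma pt_eta (a : pt) : a = (fst a, snd a).
Proof. now destruct a. Qed.

Lemma norm2_ge0 (a : pt) : 0 <= norm2 a.
Proof. unfold norm2; nra. Qed.

Lemma norm2_pos (a : pt) : a <> (0, 0) -> 0 < norm2 a.
Proof.
  intros Ha; unfold norm2; destruct a as [x y]; simpl.
  destruct (Req_dec x 0), (Req_dec y 0); subst; try nra.
  exfalso; now apply Ha.
Qed.

Lemma dist2_ge0 (a b : pt) : 0 <= dist2 a b.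
Proof.
  unfold dist2; pose proof (pow2_ge_0 (fst a - fst b)); pose proof (pow2_ge_0 (snd a - snd b)); lra.
Qed.

Lemma dist2_pos (a b : pt) : a <> b -> 0 < dist2 a b.
Proof.
  intros Hab; unfold dist2; destruct a as [a1 a2], b as [b1 b2]; simpl.
  destruct (Req_dec a1 b1), (Req_dec a2 b2); subst; try nra.
  exfalso; now apply Hab.
Qed.

Lemma dist2_sym (a b : pt) : dist2 a b = dist2 b a.
Proof. unfold dist2; ring. Qed.

Lemma dist2_refl (a : pt) : dist2 a a = 0.
Proof. unfold dist2; ring. Qed.

Lemma pairing_sym (a b : pt) : pairing a b = pairing b a.
Proof. unfold pairing; ring. Qed.

Lemma pairing_lin_l a u b v z :
  pairing (lin a u b v) z = a * pairing u z + b * pairing v z.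
Proof. unfold pairing, lin; simpl; ring. Qed.

Lemma pairing_scal_l l u z : pairing (scal l u) z = l * pairing u z.
Proof. unfold pairing, scal; simpl; ring. Qed.

Lemma pairing_scal_r l u z : pairing u (scal l z) = l * pairing u z.
Proof. unfold pairing, scal; simpl; ring. Qed.

Lemma pairing_sub_sq (a b z : pt) : (pairing a z - pairing b z) ^ 2 <= dist2 a b * norm2 z.
Proof.
  unfold pairing, dist2, norm2.
  pose proof (pow2_ge_0 ((fst a - fst b) * snd z + (snd a - snd b) * fst z)); nra.
Qed.

Lemma abs_lt_iff_sq x e : 0 < e -> Rabs x < e <-> x ^ 2 < e ^ 2.
Proof. intros He; unfold Rabs; destruct (Rcase_abs x); split; intros; nra. Qed.

Lemma div_succ_mul_lt a K : 0 < a -> 0 <= K -> a / (K + 1) * K < a.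
Proof.
  intros Ha HK; replace (a / (K + 1) * K) with (a - a / (K + 1)) by (field; lra).
  enough (0 < a / (K + 1)) by lra; apply Rdiv_lt_0_compat; lra.
Qed.

Lemma small_square_bound K e : 0 <= K -> 0 < e ->
  exists t, 0 < t /\ forall s, 0 <= s <= t -> s ^ 2 * K < e.
Proof.
  intros HK He; exists (Rmin 1 (e / (K + 1))).
  pose proof (Rmin_l 1 (e / (K + 1))); pose proof (Rmin_r 1 (e / (K + 1))).
  split; [apply Rmin_pos; [lra|apply Rdiv_lt_0_compat; lra]|].
  intros s Hs.
  assert (s * (K + 1) <= e).
  { apply (Rmult_le_reg_r (/ (K + 1))); [apply Rinv_0_lt_compat; lra|].
    rewrite Rmult_assoc, Rinv_r by lra; unfold Rdiv in *; lra. }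
  assert (s ^ 2 * K <= s * K) by (apply Rmult_le_compat_r; nra).
  nra.
Qed.

Lemma inv_succ_pos (n : nat) : 0 < / (INR n + 1).
Proof. apply Rinv_0_lt_compat; pose proof (pos_INR n); lra. Qed.

Lemma inv_succ_small e : 0 < e -> exists N, forall n, (N <= n)%nat -> / (INR n + 1) < e.
Proof.
  intros He; destruct (archimed_cor1 e He) as [N [HN HN0]]; exists N; intros n Hn.
  assert (INR N <= INR n) by now apply le_INR.
  assert (0 < INR N) by now apply lt_0_INR.
  apply (Rle_lt_trans _ (/ INR N)); [apply Rinv_le_contravar|]; lra.
Qed.

Lemma edist_lt_iff (a b : pt) e : 0 < e -> edist a b < e <-> dist2 a b < e ^ 2.
Proof.
  intros He; change (sqrt (dist2 a b) < e <-> dist2 a b < e ^ 2).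
  pose proof (dist2_ge0 a b); pose proof (sqrt_pos (dist2 a b)); split; intros Hlt.
  - rewrite <- (pow2_sqrt (dist2 a b)) by lra; nra.
  - rewrite <- (sqrt_pow2 e) by lra; apply sqrt_lt_1_alt; lra.
Qed.

Lemma edist_lt_sqrt (a b : pt) e : 0 < e -> edist a b < sqrt e <-> dist2 a b < e.
Proof.
  intros He; rewrite edist_lt_iff by now apply sqrt_lt_R0.
  now rewrite pow2_sqrt by lra.
Qed.

Lemma closure_dist2 (S : pset) a :
  closure S a <-> forall e, 0 < e -> exists b, S b /\ dist2 a b < e.
Proof.
  split; intros H e He.
  - destruct (H (sqrt e) (sqrt_lt_R0 _ He)) as [b [Hb Hd]].
    exists b; split; [easy|]; now apply edist_lt_sqrt.
  - destruct (H (e ^ 2)) as [b [Hb Hd]]; [nra|].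
    exists b; split; [easy|]; now apply edist_lt_iff.
Qed.

Lemma interior_dist2 (S : pset) a :
  interior S a <-> exists e, 0 < e /\ forall b, dist2 a b < e -> S b.
Proof.
  split; intros [e [He H]].
  - exists (e ^ 2); split; [nra|]; intros b Hb; apply H; now apply edist_lt_iff.
  - exists (sqrt e); split; [now apply sqrt_lt_R0|].
    intros b Hb; apply H; now apply edist_lt_sqrt in Hb.
Qed.

Lemma closure_self (S : pset) a : S a -> closure S a.
Proof.
  intros Ha; apply closure_dist2; intros e He; exists a; now rewrite dist2_refl.
Qed.

Lemma closed_complement_ball (S : pset) x :
  is_closed S -> ~ S x -> exists e, 0 < e /\ forall b, S b -> e <= dist2 x b.
Proof.
  intros Hcl Hx; apply NNPP; intros Hno; apply Hx, Hcl, closure_dist2.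
  intros e He; apply NNPP; intros Hfar; apply Hno; exists e; split; [easy|].
  intros b Hb; apply Rnot_lt_le; intros Hlt; apply Hfar; now exists b.
Qed.

(** * Nearest points and separation *)

Lemma pt_cauchy_limit (f : nat -> pt) :
  (forall e, 0 < e -> exists N, forall n k, (N <= n)%nat -> (N <= k)%nat -> dist2 (f n) (f k) < e) ->
  exists p, forall e, 0 < e -> exists N, forall n, (N <= n)%nat -> dist2 p (f n) < e.
Proof.
  intros Hc.
  assert (Hcoord : forall g : pt -> R, (forall a b, (g a - g b) ^ 2 <= dist2 a b) ->
            exists l, Un_cv (fun n => g (f n)) l).
  { intros g Hg; destruct (R_complete (fun n => g (f n))) as [l Hl]; [|now exists l].
    intros e He.
    destruct (Hc (e ^ 2)) as [N HN]; [nra|]; exists N; intros n k Hn Hk.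
    unfold Rdist; apply abs_lt_iff_sq; [easy|].
    specialize (HN n k Hn Hk); specialize (Hg (f n) (f k)); lra. }
  destruct (Hcoord fst) as [l1 Hl1].
  { intros a b; unfold dist2; pose proof (pow2_ge_0 (snd a - snd b)); lra. }
  destruct (Hcoord snd) as [l2 Hl2].
  { intros a b; unfold dist2; pose proof (pow2_ge_0 (fst a - fst b)); lra. }
  exists (l1, l2); intros e He.
  assert (Hs : 0 < sqrt (e / 2)) by (apply sqrt_lt_R0; lra).
  destruct (Hl1 _ Hs) as [N1 H1], (Hl2 _ Hs) as [N2 H2].
  exists (max N1 N2); intros n Hn.
  specialize (H1 n ltac:(lia)); specialize (H2 n ltac:(lia)); unfold Rdist in H1, H2.
  rewrite abs_lt_iff_sq, pow2_sqrt in H1, H2 by lra.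
  unfold dist2; simpl; nra.
Qed.

Lemma dist2_le_of_approx p x D :
  0 <= D -> (forall e, 0 < e -> exists q, dist2 p q < e /\ dist2 q x < D + e) ->
  dist2 p x <= D.
Proof.
  intros HD Happrox; apply Rnot_lt_le; intros Hlt.
  set (k := (D + 1) / (dist2 p x - D)).
  assert (Hk : k * (dist2 p x - D) = D + 1) by (unfold k; field; lra).
  assert (Hk0 : 0 < k) by (unfold k; apply Rdiv_lt_0_compat; lra).
  destruct (Happrox (/ (k + 1) ^ 2)) as [q [Hpq Hqx]].
  { apply Rinv_0_lt_compat; nra. }
  (* [2 <a, b> <= k |a|^2 + |b|^2 / k] with [a = p - q] and [b = q - x] *)
  assert (Hamgm : k * dist2 p x <= (k + 1) * dist2 q x + k * (k + 1) * dist2 p q).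
  { unfold dist2.
    pose proof (pow2_ge_0 ((fst q - fst x) - k * (fst p - fst q))).
    pose proof (pow2_ge_0 ((snd q - snd x) - k * (snd p - snd q))).
    nra. }
  assert (Hinv : (k + 1) ^ 2 * / (k + 1) ^ 2 = 1) by (field; lra).
  nra.
Qed.

Lemma dist2_infimum (S : pset) x : (exists s, S s) ->
  exists D, 0 <= D /\ (forall z, S z -> D <= dist2 z x) /\
    forall e, 0 < e -> exists z, S z /\ dist2 z x < D + e.
Proof.
  intros [s Hs].
  destruct (completeness (fun r => exists z, S z /\ r = - dist2 z x)) as [m [Hub Hlub]].
  { exists 0; intros r [z [_ ->]]; pose proof (dist2_ge0 z x); lra. }
  { now exists (- dist2 s x), s. }
  exists (- m); split; [|split].
  - enough (m <= 0) by lra.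
    apply Hlub; intros r [z [_ ->]]; pose proof (dist2_ge0 z x); lra.
  - intros z Hz; enough (- dist2 z x <= m) by lra; apply Hub; now exists z.
  - intros e He; apply NNPP; intros Hno; enough (m <= m - e) by lra.
    apply Hlub; intros r [z [Hz ->]].
    destruct (Rlt_or_le (dist2 z x) (- m + e)); [exfalso; apply Hno; now exists z|lra].
Qed.

Lemma nearest_point (S : pset) x :
  is_closed S -> is_convex S -> (exists s, S s) ->
  exists p, S p /\ forall z, S z -> dist2 p x <= dist2 z x.
Proof.
  intros Hcl Hcv Hne.
  destruct (dist2_infimum S x Hne) as [D [HD [Hlow Happrox]]].
  destruct (functional_choice (fun n z => S z /\ dist2 z x < D + / (INR n + 1))) as [f Hf].
  { intros n; apply Happrox, inv_succ_pos. }
  (* parallelogram law, with the midpoint of [f n] and [f k] in [S] *)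
  assert (Hpar : forall n k, dist2 (f n) (f k) <= 2 * / (INR n + 1) + 2 * / (INR k + 1)).
  { intros n k; destruct (Hf n) as [Sn Dn], (Hf k) as [Sk Dk].
    pose proof (Hlow _ (Hcv _ _ (1 / 2) Sn Sk ltac:(lra))) as Hmid.
    assert (dist2 (f n) (f k) = 2 * dist2 (f n) x + 2 * dist2 (f k) x
              - 4 * dist2 (lin (1 / 2) (f n) (1 - 1 / 2) (f k)) x)
      by (unfold dist2, lin; simpl; field).
    unfold lin in *; lra. }
  destruct (pt_cauchy_limit f) as [p Hp].
  { intros e He; destruct (inv_succ_small (e / 4)) as [N HN]; [lra|].
    exists N; intros n k Hn Hk; specialize (Hpar n k).
    pose proof (HN n Hn); pose proof (HN k Hk); lra. }
  exists p; split.
  - apply Hcl, closure_dist2; intros e He; destruct (Hp e He) as [N HN].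
    exists (f N); split; [apply Hf|apply HN; lia].
  - intros z Hz; apply (Rle_trans _ D); [|now apply Hlow].
    apply dist2_le_of_approx; [easy|].
    intros e He; destruct (Hp e He) as [N1 H1], (inv_succ_small e He) as [N2 H2].
    exists (f (max N1 N2)); split; [apply H1; lia|].
    destruct (Hf (max N1 N2)) as [_ Hlt]; specialize (H2 (max N1 N2) ltac:(lia)); lra.
Qed.

Lemma nearest_point_obtuse (S : pset) x p :
  is_convex S -> S p -> (forall z, S z -> dist2 p x <= dist2 z x) ->
  forall z, S z -> (fst x - fst p) * (fst z - fst p) + (snd x - snd p) * (snd z - snd p) <= 0.
Proof.
  intros Hcv Sp Hmin z Hz; apply Rnot_lt_le; intros Hw.
  set (w := (fst x - fst p) * (fst z - fst p) + (snd x - snd p) * (snd z - snd p)) in Hw.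
  pose proof (dist2_ge0 z p) as HK.
  set (t := w / (dist2 z p + w)).
  assert (Ht : t * (dist2 z p + w) = w) by (unfold t; field; lra).
  assert (Ht0 : 0 < t) by (unfold t; apply Rdiv_lt_0_compat; lra).
  pose proof (Hmin _ (Hcv z p t Hz Sp ltac:(nra))) as Hq.
  assert (dist2 (lin t z (1 - t) p) x = dist2 p x - 2 * t * w + t ^ 2 * dist2 z p)
    by (unfold w, dist2, lin; simpl; ring).
  unfold lin in *; nra.
Qed.

Lemma separation (S : pset) x :
  is_closed S -> is_convex S -> (exists s, S s) -> ~ S x ->
  exists phi c, (forall z, S z -> pairing phi z >= c) /\ pairing phi x < c.
Proof.
  intros Hcl Hcv Hne Hx.
  destruct (nearest_point S x Hcl Hcv Hne) as [p [Sp Hmin]].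
  exists (fst p - fst x, - (snd p - snd x)), (pairing (fst p - fst x, - (snd p - snd x)) p).
  split.
  - intros z Hz; pose proof (nearest_point_obtuse S x p Hcv Sp Hmin z Hz).
    unfold pairing; simpl; nra.
  - assert (Hpx : p <> x) by (intros ->; contradiction).
    pose proof (dist2_pos p x Hpx); unfold pairing, dist2 in *; simpl; nra.
Qed.

(** * The antipolar and the dual cone *)

Definition scale_stable (S : pset) : Prop :=
  forall l, l > 1 -> forall a, scale_set l S a -> S a.

Lemma scale_stable_mem (S : pset) l a : scale_stable S -> l > 1 -> S a -> S (scal l a).
Proof. intros Hsc Hl Ha; apply (Hsc l Hl); now exists a. Qed.

Lemma prop_i_nonzero Om z : prop_i Om -> Om z -> z <> (0, 0).
Proof. intros (_ & _ & _ & H0 & _) Hz ->; contradiction. Qed.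

Lemma antipolar_nonzero Om psi : (exists z, Om z) -> antipolar Om psi -> psi <> (0, 0).
Proof. intros [z Hz] Hpsi ->; specialize (Hpsi z Hz); simpl in Hpsi; lra. Qed.

Lemma antipolar_of_lower_bound Om phi c :
  0 < c -> (forall z, Om z -> pairing phi z >= c) -> antipolar Om (scal (/ c) phi).
Proof.
  intros Hc Hphi z Hz; change (pairing (scal (/ c) phi) z >= 1).
  rewrite pairing_scal_l; specialize (Hphi z Hz).
  apply Rle_ge, (Rmult_le_reg_l c); [lra|].
  rewrite <- Rmult_assoc, Rinv_r, Rmult_1_l by lra; lra.
Qed.

Lemma antipolar_nonempty Om : prop_i Om -> exists psi, antipolar Om psi.
Proof.
  intros (Hne & Hcv & Hcl & H0 & _).
  destruct (separation Om (0, 0) Hcl Hcv Hne H0) as [phi [c [Hphi Hc]]].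
  unfold pairing in Hc; simpl in Hc.
  exists (scal (/ c) phi); apply antipolar_of_lower_bound; [lra|easy].
Qed.

Lemma pairing_nonneg_of_lower_bound Om phi c :
  scale_stable Om -> (forall z, Om z -> pairing phi z >= c) -> forall z, Om z -> pairing phi z >= 0.
Proof.
  intros Hsc Hc z Hz; apply Rnot_lt_ge; intros Hneg.
  set (l := 1 + (Rabs c + 1) / - pairing phi z).
  assert (Hl : l > 1).
  { enough (0 < (Rabs c + 1) / - pairing phi z) by (unfold l; lra).
    apply Rdiv_lt_0_compat; pose proof (Rabs_pos c); lra. }
  specialize (Hc _ (scale_stable_mem Om l z Hsc Hl Hz)).
  rewrite pairing_scal_r in Hc.
  replace (l * pairing phi z) with (pairing phi z - (Rabs c + 1)) in Hc by (unfold l; field; lra).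
  pose proof (Rle_abs (- c)); rewrite Rabs_Ropp in *; lra.
Qed.

Lemma antipolar_antipolar_sub Om x : prop_i Om -> antipolar (antipolar Om) x -> Om x.
Proof.
  intros Hi Hx; apply NNPP; intros Hn.
  pose proof Hi as (Hne & Hcv & Hcl & _ & Hsc).
  destruct (separation Om x Hcl Hcv Hne Hn) as [phi [c [Hphi Hc]]].
  pose proof (pairing_nonneg_of_lower_bound Om phi c Hsc Hphi) as Hpos.
  assert (Hxpsi : forall psi, antipolar Om psi -> pairing psi x >= 1).
  { intros psi Hpsi; rewrite pairing_sym; exact (Hx psi Hpsi). }
  destruct (Rlt_or_le 0 c) as [Hc0|Hc0].
  - pose proof (Hxpsi _ (antipolar_of_lower_bound Om phi c Hc0 Hphi)) as Hscaled.
    rewrite pairing_scal_l in Hscaled.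
    enough (/ c * pairing phi x < 1) by lra.
    apply (Rmult_lt_reg_l c); [lra|]; rewrite <- Rmult_assoc, Rinv_r, Rmult_1_l by lra; lra.
  - destruct (antipolar_nonempty Om Hi) as [psi0 Hpsi0].
    set (M := (Rabs (pairing psi0 x) + 1) / - pairing phi x).
    assert (HM : 0 < M) by (apply Rdiv_lt_0_compat; pose proof (Rabs_pos (pairing psi0 x)); lra).
    specialize (Hxpsi (lin 1 psi0 M phi)); rewrite pairing_lin_l in Hxpsi.
    replace (M * pairing phi x) with (- (Rabs (pairing psi0 x) + 1)) in Hxpsi
      by (unfold M; field; lra).
    enough (1 * pairing psi0 x + - (Rabs (pairing psi0 x) + 1) >= 1)
      by (pose proof (Rle_abs (pairing psi0 x)); lra).
    apply Hxpsi; intros z Hz; change (pairing (lin 1 psi0 M phi) z >= 1).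
    rewrite pairing_lin_l; specialize (Hpsi0 z Hz); specialize (Hpos z Hz).
    change (pairing psi0 z >= 1) in Hpsi0; nra.
Qed.

Lemma bipolar Om : prop_i Om -> antipolar (antipolar Om) = Om.
Proof.
  intros Hi; apply functional_extensionality; intros x; apply propositional_extensionality.
  split; [now apply antipolar_antipolar_sub|].
  intros Hx psi Hpsi; specialize (Hpsi x Hx); change (pairing psi x >= 1) in Hpsi.
  change (pairing x psi >= 1); now rewrite pairing_sym.
Qed.

Lemma pairing_ge_closure (S : pset) z c phi :
  (forall psi, S psi -> pairing psi z >= c) -> closure S phi -> pairing phi z >= c.
Proof.
  intros HS Hphi; apply Rnot_lt_ge; intros Hlt.
  pose proof (norm2_ge0 z).
  destruct (proj1 (closure_dist2 S phi) Hphi ((c - pairing phi z) ^ 2 / (norm2 z + 1)))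
    as [psi [Hpsi Hd]].
  { apply Rdiv_lt_0_compat; nra. }
  specialize (HS psi Hpsi); pose proof (pairing_sub_sq psi phi z) as Hsq.
  rewrite dist2_sym in Hd.
  assert (dist2 psi phi * norm2 z <= (c - pairing phi z) ^ 2 / (norm2 z + 1) * norm2 z)
    by (apply Rmult_le_compat_r; lra).
  assert ((c - pairing phi z) ^ 2 / (norm2 z + 1) * norm2 z < (c - pairing phi z) ^ 2).
  { apply div_succ_mul_lt; [nra|lra]. }
  nra.
Qed.

Lemma antipolar_prop_i Om : prop_i Om -> prop_i (antipolar Om).
Proof.
  intros Hi; pose proof Hi as ([w Hw] & _).
  split; [now apply antipolar_nonempty|]; split; [|split; [|split]].
  - intros a b t Ha Hb Ht z Hz; specialize (Ha z Hz); specialize (Hb z Hz); simpl; nra.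
  - intros phi Hphi z Hz; apply (pairing_ge_closure (antipolar Om) z 1 phi); [|easy].
    intros psi Hpsi; apply Hpsi, Hz.
  - intros H0; specialize (H0 w Hw); simpl in H0; lra.
  - intros l Hl a [s [Hs ->]] z Hz; specialize (Hs z Hz); unfold scal; simpl; nra.
Qed.

Definition dual_cone (Om : pset) : pset := fun phi => forall z, Om z -> pairing phi z >= 0.

Lemma antipolar_sub_dual_cone Om psi : antipolar Om psi -> dual_cone Om psi.
Proof. intros Hpsi z Hz; specialize (Hpsi z Hz); change (pairing psi z >= 1) in Hpsi; lra. Qed.

Lemma closure_cone_hull_antipolar Om :
  prop_i Om -> closure (cone_hull (antipolar Om)) = dual_cone Om.
Proof.
  intros Hi; apply functional_extensionality; intros phi; apply propositional_extensionality.
  split.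
  - intros Hphi z Hz; apply (pairing_ge_closure (cone_hull (antipolar Om)) z 0 phi); [|easy].
    intros psi [l [s [Hl [Hs ->]]]]; rewrite pairing_scal_l.
    specialize (Hs z Hz); change (pairing s z >= 1) in Hs; nra.
  - intros Hphi; destruct (antipolar_nonempty Om Hi) as [psi0 Hpsi0].
    apply closure_dist2; intros e He.
    destruct (small_square_bound (norm2 psi0) e (norm2_ge0 psi0) He) as [t [Ht Hsmall]].
    exists (lin 1 phi t psi0); split.
    + exists t, (lin (/ t) phi 1 psi0); split; [lra|split; [|pt_eq]].
      intros z Hz; change (pairing (lin (/ t) phi 1 psi0) z >= 1); rewrite pairing_lin_l.
      specialize (Hphi z Hz); specialize (Hpsi0 z Hz); change (pairing psi0 z >= 1) in Hpsi0.
      assert (0 <= / t * pairing phi z) by (apply Rmult_le_pos; [left; now apply Rinv_0_lt_compat|lra]).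
      lra.
    + replace (dist2 phi (lin 1 phi t psi0)) with (t ^ 2 * norm2 psi0)
        by (unfold dist2, norm2, lin; simpl; ring).
      apply Hsmall; lra.
Qed.

Lemma dual_cone_closed Om : is_closed (dual_cone Om).
Proof.
  intros phi Hphi z Hz; apply (pairing_ge_closure (dual_cone Om) z 0 phi); [|easy].
  intros psi Hpsi; apply Hpsi, Hz.
Qed.

Lemma dual_cone_convex Om : is_convex (dual_cone Om).
Proof.
  intros a b t Ha Hb Ht z Hz; specialize (Ha z Hz); specialize (Hb z Hz).
  change (pairing (lin t a (1 - t) b) z >= 0); rewrite pairing_lin_l; nra.
Qed.

Lemma dual_cone_scal Om l a : 0 <= l -> dual_cone Om a -> dual_cone Om (scal l a).
Proof. intros Hl Ha z Hz; specialize (Ha z Hz); rewrite pairing_scal_l; nra. Qed.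

Lemma dual_cone_nontrivial Om : prop_i Om -> exists c, dual_cone Om c /\ c <> (0, 0).
Proof.
  intros Hi; pose proof Hi as (Hne & _).
  destruct (antipolar_nonempty Om Hi) as [psi Hpsi]; exists psi.
  split; [now apply antipolar_sub_dual_cone|now apply (antipolar_nonzero Om)].
Qed.

Lemma dual_cone_proper Om : prop_i Om -> exists phi, ~ dual_cone Om phi.
Proof.
  intros Hi; pose proof Hi as ([w Hw] & _).
  pose proof (norm2_pos w (prop_i_nonzero Om w Hi Hw)).
  exists (- fst w, snd w); intros Hin; specialize (Hin w Hw).
  unfold pairing, norm2 in *; simpl in *; nra.
Qed.

(** * Boundaries of closed convex cones in the plane *)

Lemma dist2_lin_segment (a b : pt) s t :
  dist2 (lin (1 - s) a s b) (lin (1 - t) a t b) = (s - t) ^ 2 * dist2 a b.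
Proof. unfold dist2, lin; simpl; ring. Qed.

Lemma segment_boundary (S : pset) a b :
  is_closed S -> S a -> ~ S b -> exists t, 0 <= t < 1 /\ boundary S (lin (1 - t) a t b).
Proof.
  intros Hcl Ha Hb.
  set (T := fun t => 0 <= t <= 1 /\ S (lin (1 - t) a t b)).
  assert (HT0 : T 0) by (split; [lra|]; replace (lin (1 - 0) a 0 b) with a by pt_eq; easy).
  destruct (completeness T) as [ts [Hub Hlub]]; [exists 1; now intros t [Ht _]|now exists 0|].
  assert (Hts : 0 <= ts <= 1) by (split; [apply Hub, HT0|apply Hlub; now intros t [Ht _]]).
  assert (Hin : S (lin (1 - ts) a ts b)).
  { apply Hcl, closure_dist2; intros e He.
    destruct (small_square_bound (dist2 a b) e (dist2_ge0 a b) He) as [r [Hr Hsmall]].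
    assert (Hex : exists t, T t /\ ts - r < t).
    { apply NNPP; intros Hno; enough (ts <= ts - r) by lra.
      apply Hlub; intros t Ht; apply Rnot_lt_le; intros Hlt; apply Hno; now exists t. }
    destruct Hex as [t [Ht Htr]]; pose proof (Hub t Ht).
    exists (lin (1 - t) a t b); split; [apply Ht|].
    rewrite dist2_lin_segment; apply Hsmall; lra. }
  assert (Hlt : ts < 1).
  { destruct (Rle_lt_or_eq_dec _ _ (proj2 Hts)) as [|Heq]; [easy|].
    exfalso; apply Hb; rewrite Heq in Hin; now replace b with (lin (1 - 1) a 1 b) by pt_eq. }
  exists ts; split; [lra|]; split; [now apply closure_self|].
  intros Hint; apply interior_dist2 in Hint; destruct Hint as [e [He Hball]].
  destruct (small_square_bound (dist2 a b) e (dist2_ge0 a b) He) as [r [Hr Hsmall]].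
  set (s := Rmin r (1 - ts)).
  assert (Hs : 0 < s <= 1 - ts /\ s <= r)
    by (unfold s; split; [split; [apply Rmin_pos|apply Rmin_r]|apply Rmin_l]; lra).
  enough (ts + s <= ts) by lra.
  apply Hub; split; [lra|]; apply Hball.
  rewrite dist2_lin_segment; replace ((ts - (ts + s)) ^ 2) with (s ^ 2) by ring.
  apply Hsmall; lra.
Qed.

Lemma linear_form_pos_near p q y :
  0 < p * fst y + q * snd y ->
  exists e, 0 < e /\ forall y', dist2 y y' < e -> 0 < p * fst y' + q * snd y'.
Proof.
  intros Hy; set (L := p * fst y + q * snd y) in Hy.
  pose proof (pow2_ge_0 p); pose proof (pow2_ge_0 q).
  exists (L ^ 2 / (p ^ 2 + q ^ 2 + 1)); split; [apply Rdiv_lt_0_compat; nra|].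
  intros y' Hy'.
  assert (Hcs : (p * fst y' + q * snd y' - L) ^ 2 <= dist2 y y' * (p ^ 2 + q ^ 2)).
  { unfold L, dist2.
    pose proof (pow2_ge_0 ((fst y - fst y') * q - (snd y - snd y') * p)); nra. }
  assert (dist2 y y' * (p ^ 2 + q ^ 2) <= L ^ 2 / (p ^ 2 + q ^ 2 + 1) * (p ^ 2 + q ^ 2))
    by (apply Rmult_le_compat_r; lra).
  pose proof (div_succ_mul_lt (L ^ 2) (p ^ 2 + q ^ 2) ltac:(nra) ltac:(lra)).
  nra.
Qed.

Lemma lin_coords u v y :
  det u v <> 0 -> y = lin (det y v / det u v) u (det u y / det u v) v.
Proof. intros HD; unfold det in *; pt_eq. Qed.

Lemma det_zero_scal u v : det u v = 0 -> u <> (0, 0) -> exists k, v = scal k u.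
Proof.
  intros HD Hu; pose proof (norm2_pos u Hu) as Hn.
  exists ((fst u * fst v + snd u * snd v) / norm2 u).
  unfold det, norm2 in *; destruct u as [u1 u2], v as [v1 v2]; simpl in *.
  assert (u1 * (u1 * v2 - u2 * v1) = 0 /\ u2 * (u1 * v2 - u2 * v1) = 0) by (rewrite HD; lra).
  unfold scal; simpl; f_equal; field_simplify_eq; lra.
Qed.

Section PlaneCone.

Variable C : pset.
Hypothesis C_closed : is_closed C.
Hypothesis C_convex : is_convex C.
Hypothesis C_cone : forall l a, 0 <= l -> C a -> C (scal l a).

Lemma cone_lin u v a b : C u -> C v -> 0 <= a -> 0 <= b -> C (lin a u b v).
Proof.
  intros Hu Hv Ha Hb.
  destruct (Req_dec (a + b) 0) as [Hab|Hab].
  - replace (lin a u b v) with (scal 0 u) by (replace a with 0 by lra; replace b with 0 by lra; pt_eq).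
    apply C_cone; [lra|easy].
  - replace (lin a u b v) with (scal (a + b) (lin (a / (a + b)) u (1 - a / (a + b)) v)) by pt_eq.
    apply C_cone; [lra|]; apply C_convex; [easy|easy|].
    split; [apply Rmult_le_pos; [lra|left; apply Rinv_0_lt_compat; lra]|].
    apply (Rmult_le_reg_r (a + b)); [lra|]; unfold Rdiv.
    rewrite Rmult_assoc, Rinv_l by lra; lra.
Qed.

Lemma interior_lin_pos u v a b :
  C u -> C v -> det u v <> 0 -> 0 < a -> 0 < b -> interior C (lin a u b v).
Proof.
  intros Hu Hv HD Ha Hb; set (y := lin a u b v).
  destruct (linear_form_pos_near (snd v / det u v) (- fst v / det u v) y) as [e1 [He1 H1]].
  { replace (snd v / det u v * fst y + - fst v / det u v * snd y) with a
      by (unfold y, det, lin in *; simpl; field; auto); easy. }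
  destruct (linear_form_pos_near (- snd u / det u v) (fst u / det u v) y) as [e2 [He2 H2]].
  { replace (- snd u / det u v * fst y + fst u / det u v * snd y) with b
      by (unfold y, det, lin in *; simpl; field; auto); easy. }
  apply interior_dist2; exists (Rmin e1 e2); split; [now apply Rmin_pos|].
  intros y' Hy'; rewrite (lin_coords u v y' HD); apply cone_lin; [easy|easy| |].
  - specialize (H1 y' (Rlt_le_trans _ _ _ Hy' (Rmin_l _ _))); left.
    replace (det y' v / det u v) with (snd v / det u v * fst y' + - fst v / det u v * snd y')
      by (unfold det; field; auto); easy.
  - specialize (H2 y' (Rlt_le_trans _ _ _ Hy' (Rmin_r _ _))); left.
    replace (det u y' / det u v) with (- snd u / det u v * fst y' + fst u / det u v * snd y')
      by (unfold det; field; auto); easy.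
Qed.

Lemma interior_of_opposite u v : C u -> C v -> C (scal (-1) v) -> det u v <> 0 -> interior C u.
Proof.
  intros Hu Hv Hv' HD.
  replace u with (lin (1 / 2) (lin 1 u 1 v) (1 / 2) (lin 1 u 1 (scal (-1) v))) by pt_eq.
  apply interior_lin_pos; try apply cone_lin; try lra; try easy.
  unfold det, lin, scal in *; simpl; intros Hz; apply HD; lra.
Qed.

Lemma interior_of_neg_coef u v a b :
  C u -> C v -> C (lin a u b v) -> det u v <> 0 -> a < 0 -> interior C v.
Proof.
  intros Hu Hv Hw HD Ha; destruct (Rlt_or_le 0 b) as [Hb|Hb].
  - replace v with (lin (/ b) (lin a u b v) (- a / b) u) by pt_eq.
    apply interior_lin_pos; [easy|easy| |apply Rinv_0_lt_compat, Hb|].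
    + unfold det, lin in *; simpl; intros Hz; apply HD; nra.
    + apply Rdiv_lt_0_compat; lra.
  - apply (interior_of_opposite v (lin a u b v)); [easy|easy| |].
    + replace (scal (-1) (lin a u b v)) with (lin (- a) u (- b) v) by pt_eq.
      apply cone_lin; auto; lra.
    + unfold det, lin in *; simpl; intros Hz; apply HD; nra.
Qed.

Lemma boundary_mem a : boundary C a -> C a.
Proof. intros [Ha _]; now apply C_closed. Qed.

Lemma boundary_of_independent u v w :
  boundary C u -> boundary C v -> det u v <> 0 -> boundary C w -> ray u w \/ ray v w.
Proof.
  intros Bu Bv HD Bw.
  pose proof (boundary_mem u Bu) as Hu; pose proof (boundary_mem v Bv) as Hv.
  pose proof (boundary_mem w Bw) as Hw; rewrite (lin_coords u v w HD) in Bw, Hw |- *.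
  set (a := det w v / det u v) in *; set (b := det u w / det u v) in *.
  destruct (Rlt_or_le a 0) as [Ha|Ha].
  { exfalso; apply (proj2 Bv); now apply (interior_of_neg_coef u v a b). }
  destruct (Rlt_or_le b 0) as [Hb|Hb].
  { exfalso; apply (proj2 Bu), (interior_of_neg_coef v u b a); try easy.
    - now replace (lin b v a u) with (lin a u b v) by pt_eq.
    - unfold det in *; intros Hz; apply HD; lra. }
  destruct (Req_dec a 0) as [Ha0|Ha0]; [right; exists b; split; [easy|]; rewrite Ha0; pt_eq|].
  destruct (Req_dec b 0) as [Hb0|Hb0]; [left; exists a; split; [easy|]; rewrite Hb0; pt_eq|].
  exfalso; apply (proj2 Bw), interior_lin_pos; auto; lra.
Qed.

Lemma boundary_scal a l : 0 < l -> boundary C a -> boundary C (scal l a).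
Proof.
  intros Hl [Hc Hni].
  assert (Hd : forall b, dist2 (scal l a) (scal l b) = l ^ 2 * dist2 a b)
    by (intros b; unfold dist2, scal; simpl; ring).
  assert (Hl2 : 0 < l ^ 2) by nra.
  split.
  - apply closure_dist2; intros e He.
    destruct (proj1 (closure_dist2 C a) Hc (e / l ^ 2)) as [b [Hb Hab]].
    { now apply Rdiv_lt_0_compat. }
    exists (scal l b); split; [apply C_cone; [lra|easy]|rewrite Hd].
    apply (Rmult_lt_compat_l (l ^ 2)) in Hab; [|easy].
    now replace (l ^ 2 * (e / l ^ 2)) with e in Hab by (field; lra).
  - intros Hint; apply Hni, interior_dist2; apply interior_dist2 in Hint.
    destruct Hint as [e [He Hball]]; exists (e / l ^ 2).
    split; [now apply Rdiv_lt_0_compat|]; intros b Hab.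
    replace b with (scal (/ l) (scal l b)) by pt_eq.
    apply C_cone; [left; now apply Rinv_0_lt_compat|]; apply Hball; rewrite Hd.
    apply (Rmult_lt_compat_l (l ^ 2)) in Hab; [|easy].
    now replace (l ^ 2 * (e / l ^ 2)) with e in Hab by (field; lra).
Qed.

Hypothesis C_proper : exists phi, ~ C phi.

Lemma origin_boundary : C (0, 0) -> boundary C (0, 0).
Proof.
  intros H0; split; [now apply closure_self|]; intros Hint.
  apply interior_dist2 in Hint; destruct Hint as [e [He Hball]].
  destruct C_proper as [phi Hphi]; apply Hphi.
  destruct (small_square_bound (norm2 phi) e (norm2_ge0 phi) He) as [t [Ht Hsmall]].
  replace phi with (scal (/ t) (scal t phi)) by pt_eq.
  apply C_cone; [left; now apply Rinv_0_lt_compat|]; apply Hball.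
  replace (dist2 (0, 0) (scal t phi)) with (t ^ 2 * norm2 phi) by (unfold dist2, norm2, scal; simpl; ring).
  apply Hsmall; lra.
Qed.

Lemma ray_boundary d a : boundary C d -> ray d a -> boundary C a.
Proof.
  intros Bd [t [Ht ->]]; destruct (Rle_lt_or_eq_dec _ _ Ht) as [Ht0|<-].
  - now apply boundary_scal.
  - replace (scal 0 d) with ((0, 0) : pt) by pt_eq.
    apply origin_boundary; replace ((0, 0) : pt) with (scal 0 d) by pt_eq.
    apply C_cone; [lra|now apply boundary_mem].
Qed.

Hypothesis C_nontrivial : exists c, C c /\ c <> (0, 0).

Lemma exists_nonzero_boundary : exists d, d <> (0, 0) /\ boundary C d.
Proof.
  destruct C_nontrivial as [c [Hc Hc0]], C_proper as [phi Hphi].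
  pose proof (norm2_pos c Hc0) as Hnc.
  assert (Hout : exists phi', ~ C phi' /\ det c phi' <> 0).
  { destruct (Req_dec (det c phi) 0) as [HD|HD]; [|now exists phi].
    destruct (closed_complement_ball C phi C_closed Hphi) as [e [He Hfar]].
    destruct (small_square_bound (norm2 c) e (norm2_ge0 c) He) as [t [Ht Hsmall]].
    (* move [phi] off the line [R c] in the direction of the rotated vector *)
    exists (lin 1 phi t (- snd c, fst c)); split.
    - intros Hin; specialize (Hfar _ Hin).
      replace (dist2 phi (lin 1 phi t (- snd c, fst c))) with (t ^ 2 * norm2 c) in Hfar
        by (unfold dist2, norm2, lin; simpl; ring).
      specialize (Hsmall t ltac:(lra)); lra.
    - replace (det c (lin 1 phi t (- snd c, fst c))) with (det c phi + t * norm2 c)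
        by (unfold det, norm2, lin; simpl; ring).
      rewrite HD; nra. }
  destruct Hout as [phi' [Hphi' HD]].
  destruct (segment_boundary C c phi' C_closed Hc Hphi') as [t [Ht Hbd]].
  exists (lin (1 - t) c t phi'); split; [|easy]; intros Hz.
  assert (Hdet : det c (lin (1 - t) c t phi') = t * det c phi') by (unfold det, lin; simpl; ring).
  rewrite Hz in Hdet; unfold det at 1 in Hdet; simpl in Hdet.
  assert (t = 0) by (destruct (Rmult_integral t (det c phi')); [lra|easy|contradiction]).
  apply Hc0; rewrite <- Hz; subst t; pt_eq.
Qed.

Lemma cone_boundary_two_rays : exists d0 d1, d0 <> (0, 0) /\ d1 <> (0, 0) /\
  (forall a, boundary C a <-> ray d0 a \/ ray d1 a).
Proof.
  destruct exists_nonzero_boundary as [d0 [N0 B0]].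
  destruct (classic (exists d1, boundary C d1 /\ det d0 d1 <> 0)) as [[d1 [B1 HD]]|Hcol].
  - exists d0, d1; split; [easy|split; [intros ->; apply HD; unfold det; simpl; ring|]].
    intros a; split; [now apply boundary_of_independent|].
    intros [Ha|Ha]; [apply (ray_boundary d0)|apply (ray_boundary d1)]; easy.
  - assert (Hline : forall a, boundary C a -> exists k, a = scal k d0).
    { intros a Ba; apply det_zero_scal; [|easy].
      apply NNPP; intros HD; apply Hcol; now exists a. }
    destruct (classic (boundary C (scal (-1) d0))) as [Bopp|Bopp].
    + exists d0, (scal (-1) d0); split; [easy|split].
      { intros Hz; apply N0; unfold scal in Hz; injection Hz; intros.
        rewrite (pt_eta d0); f_equal; lra. }
      intros a; split.
      * intros Ba; destruct (Hline a Ba) as [k ->].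
        destruct (Rle_or_lt 0 k); [left; now exists k|right; exists (- k); split; [lra|pt_eq]].
      * intros [Ha|Ha]; [apply (ray_boundary d0)|apply (ray_boundary (scal (-1) d0))]; easy.
    + exists d0, d0; split; [easy|split; [easy|]].
      intros a; split; [|intros [Ha|Ha]; now apply (ray_boundary d0)].
      intros Ba; left; destruct (Hline a Ba) as [k ->]; exists k; split; [|easy].
      apply Rnot_lt_le; intros Hk; apply Bopp, (ray_boundary (scal k d0)); [easy|].
      exists (- / k); split; [left; apply Ropp_0_gt_lt_contravar, Rinv_lt_0_compat, Hk|pt_eq].
Qed.

End PlaneCone.

(** * From (star) for Om to (star star) for its antipolar *)

Lemma not_interior_of_support (A : pset) u v :
  (forall y, A y -> pairing y v >= 0) -> pairing u v = 0 -> v <> (0, 0) -> ~ interior A u.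
Proof.
  intros HA Hu Hv Hint; apply interior_dist2 in Hint; destruct Hint as [e [He Hball]].
  pose proof (norm2_pos v Hv).
  destruct (small_square_bound (norm2 v) e (norm2_ge0 v) He) as [t [Ht Hsmall]].
  specialize (HA (lin 1 u (- t) (fst v, - snd v))).
  rewrite pairing_lin_l, Hu in HA.
  replace (pairing (fst v, - snd v) v) with (norm2 v) in HA by (unfold pairing, norm2; simpl; ring).
  enough (- t * norm2 v >= 0) by nra.
  replace (- t * norm2 v) with (1 * 0 + - t * norm2 v) by ring; apply HA, Hball.
  replace (dist2 u (lin 1 u (- t) (fst v, - snd v))) with (t ^ 2 * norm2 v)
    by (unfold dist2, norm2, lin; simpl; ring).
  apply Hsmall; lra.
Qed.

Lemma dual_cone_pos Om phi : prop_i Om -> prop_star Om ->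
  dual_cone Om phi -> phi <> (0, 0) -> forall z, Om z -> pairing phi z > 0.
Proof.
  intros Hi Hs Hphi Hn z Hz; pose proof Hi as (_ & _ & _ & _ & Hsc).
  destruct (Rle_lt_or_eq_dec 0 (pairing phi z)) as [|H0]; [specialize (Hphi z Hz); lra|easy|].
  (* otherwise [2 z] would be a point of [2 Om] on the boundary of [Om] *)
  exfalso; apply (Hs 2 ltac:(lra) (scal 2 z)); split; [now exists z|].
  split; [now apply closure_self, scale_stable_mem; [|lra|]|].
  apply (not_interior_of_support Om (scal 2 z) phi); [| |easy].
  - intros y Hy; rewrite pairing_sym; now apply Hphi.
  - rewrite pairing_sym, pairing_scal_r; lra.
Qed.

Lemma bounded_seq_cluster (u : nat -> R) M :
  (forall n, - M <= u n <= M) ->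
  exists l, forall r, 0 < r -> forall N, exists p, (N <= p)%nat /\ (u p - l) ^ 2 < r.
Proof.
  intros Hb; destruct (Rtopology.Bolzano_Weierstrass u _ (Rtopology.compact_P3 (- M) M) Hb)
    as [l Hl].
  exists l; intros r Hr N.
  assert (Hs : 0 < sqrt r) by now apply sqrt_lt_R0.
  destruct (Hl (Rtopology.disc l (mkposreal _ Hs)) N) as [p [Hp Hdisc]].
  { now exists (mkposreal _ Hs). }
  exists p; split; [easy|]; unfold Rtopology.disc in Hdisc; simpl in Hdisc.
  apply abs_lt_iff_sq in Hdisc; [|easy]; now rewrite pow2_sqrt in Hdisc by lra.
Qed.

Lemma pairing_pos_bounded_below (S : pset) d R2 :
  is_closed S -> d <> (0, 0) -> (forall z, S z -> pairing d z > 0) ->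
  exists m, 0 < m /\ forall z, S z -> norm2 z <= R2 -> pairing d z >= m.
Proof.
  intros Hcl Hd Hpos; pose proof (norm2_pos d Hd) as Hnd.
  apply NNPP; intros Hno.
  destruct (functional_choice (fun n z => S z /\ norm2 z <= R2 /\ pairing d z < / (INR n + 1)))
    as [f Hf].
  { intros n; apply NNPP; intros Hn; apply Hno; exists (/ (INR n + 1)).
    split; [apply inv_succ_pos|]; intros z Hz HR.
    apply Rnot_lt_ge; intros Hlt; apply Hn; now exists z. }
  (* [pairing d] and [h] are orthogonal coordinates, up to the factor [norm2 d] *)
  set (h := fun z : pt => snd d * fst z + fst d * snd z).
  assert (Hlagrange : forall z, h z ^ 2 + pairing d z ^ 2 = norm2 d * norm2 z)
    by (intros z; unfold h, pairing, norm2; ring).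
  destruct (bounded_seq_cluster (fun n => h (f n)) (norm2 d + R2 + 1)) as [l Hl].
  { intros n; destruct (Hf n) as [_ [HR _]].
    pose proof (norm2_ge0 (f n)); pose proof (Hlagrange (f n)).
    pose proof (pow2_ge_0 (pairing d (f n))).
    assert (Hh : h (f n) ^ 2 < (norm2 d + R2 + 1) ^ 2) by nra.
    apply abs_lt_iff_sq in Hh; [|lra].
    unfold Rabs in Hh; destruct (Rcase_abs (h (f n))); lra. }
  set (zs := (snd d * l / norm2 d, fst d * l / norm2 d)).
  assert (Hzs : S zs).
  { apply Hcl, closure_dist2; intros e He.
    destruct (inv_succ_small (sqrt (e * norm2 d / 2))) as [N HN].
    { apply sqrt_lt_R0; nra. }
    destruct (Hl (e * norm2 d / 2) ltac:(nra) N) as [p [Hp Hhp]].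
    destruct (Hf p) as [Hz [_ Hlt]]; exists (f p); split; [easy|].
    specialize (HN p Hp); pose proof (Hpos _ Hz).
    assert (Hp2 : pairing d (f p) ^ 2 < e * norm2 d / 2).
    { rewrite <- (pow2_sqrt (e * norm2 d / 2)) by nra.
      pose proof (sqrt_pos (e * norm2 d / 2)); nra. }
    assert (Hid : dist2 zs (f p) * norm2 d = pairing d (f p) ^ 2 + (h (f p) - l) ^ 2)
      by (unfold zs, dist2, pairing, h, norm2 in *; simpl; field; lra).
    apply (Rmult_lt_reg_r (norm2 d)); lra. }
  specialize (Hpos _ Hzs); unfold pairing, zs in Hpos; simpl in Hpos.
  replace (fst d * (snd d * l / norm2 d) - snd d * (fst d * l / norm2 d)) with 0 in Hpos
    by (field; lra).
  lra.
Qed.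

Lemma interior_dual_cone_coercive Om psi0 : interior (dual_cone Om) psi0 ->
  exists eta, 0 < eta /\ forall z, Om z -> pairing psi0 z >= eta * sqrt (norm2 z).
Proof.
  intros Hint; apply interior_dist2 in Hint; destruct Hint as [e [He Hball]].
  set (eta := sqrt (e / 2)); exists eta.
  assert (Heta : eta * eta = e / 2) by (apply sqrt_sqrt; lra).
  split; [apply sqrt_lt_R0; lra|]; intros z Hz.
  destruct (classic (z = (0, 0))) as [->|Hz0].
  { replace (norm2 (0, 0)) with 0 by (unfold norm2; simpl; ring).
    rewrite sqrt_0; unfold pairing; simpl; lra. }
  pose proof (norm2_pos z Hz0) as Hn; set (S := sqrt (norm2 z)).
  assert (HS : 0 < S) by now apply sqrt_lt_R0.
  assert (HS2 : S * S = norm2 z) by (apply sqrt_sqrt; lra).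
  (* move [psi0] by [eta] against the direction in which [pairing _ z] grows fastest *)
  set (y := lin 1 psi0 (- eta / S) (fst z, - snd z)).
  assert (Hy : dual_cone Om y).
  { apply Hball; replace (dist2 psi0 y) with (eta * eta * norm2 z / (S * S))
      by (unfold y, dist2, lin, norm2; simpl; field; lra).
    rewrite HS2; replace (eta * eta * norm2 z / norm2 z) with (eta * eta) by (field; lra); lra. }
  specialize (Hy z Hz); unfold y in Hy; rewrite pairing_lin_l in Hy.
  replace (pairing (fst z, - snd z) z) with (S * S) in Hy by (rewrite HS2; unfold pairing, norm2; simpl; ring).
  replace (- eta / S * (S * S)) with (- (eta * S)) in Hy by (field; lra); lra.
Qed.

Lemma ray_dist_zero_antipolar Om d psi0 eta :
  is_closed Om -> d <> (0, 0) -> (forall z, Om z -> pairing d z > 0) -> 0 < eta ->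
  (forall z, Om z -> pairing psi0 z >= eta * sqrt (norm2 z)) ->
  dist_zero (ray d) (antipolar Om).
Proof.
  intros Hcl Hd Hpos Heta Hcoer e He.
  destruct (small_square_bound (norm2 psi0) (e ^ 2) (norm2_ge0 psi0) ltac:(nra)) as [s [Hs Hsmall]].
  (* far from the origin [s psi0] alone lies above 1, near it [t d] does *)
  set (R := / (s * eta)).
  assert (HR : 0 < R) by (apply Rinv_0_lt_compat; nra).
  destruct (pairing_pos_bounded_below Om d (R ^ 2) Hcl Hd Hpos) as [m [Hm Hmin]].
  set (t := / m); assert (Ht : t * m = 1) by (unfold t; field; lra).
  exists (scal t d), (lin t d s psi0); split; [exists t; split; [left; now apply Rinv_0_lt_compat|easy]|].
  split.
  - intros z Hz; change (pairing (lin t d s psi0) z >= 1); rewrite pairing_lin_l.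
    pose proof (Hpos z Hz); pose proof (Hcoer z Hz); pose proof (sqrt_pos (norm2 z)).
    assert (0 <= t) by (left; now apply Rinv_0_lt_compat).
    assert (0 <= s * pairing psi0 z) by (apply Rmult_le_pos; nra).
    destruct (Rle_or_lt (norm2 z) (R ^ 2)) as [Hz2|Hz2].
    + specialize (Hmin z Hz Hz2); nra.
    + assert (R < sqrt (norm2 z)).
      { rewrite <- (sqrt_pow2 R) by lra; apply sqrt_lt_1_alt; split; [nra|easy]. }
      assert (s * eta * R = 1) by (unfold R; field; nra).
      assert (s * eta * R < s * eta * sqrt (norm2 z)) by (apply Rmult_lt_compat_l; nra).
      assert (0 <= t * pairing d z) by nra.
      nra.
  - apply edist_lt_iff; [easy|].
    replace (dist2 (scal t d) (lin t d s psi0)) with (s ^ 2 * norm2 psi0)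
      by (unfold dist2, norm2, scal, lin; simpl; ring).
    apply Hsmall; lra.
Qed.

Lemma boundary_dual_cone_dist_zero Om d : prop_i Om -> prop_star Om ->
  boundary (dual_cone Om) d -> d <> (0, 0) -> dist_zero (ray d) (antipolar Om).
Proof.
  intros Hi Hs Bd Hd; pose proof Hi as ([w Hw] & _ & Hcl & _).
  assert (Kd : dual_cone Om d) by (apply dual_cone_closed, Bd).
  pose proof (dual_cone_pos Om d Hi Hs Kd Hd) as Hpos.
  destruct (antipolar_nonempty Om Hi) as [psi1 Hpsi1].
  destruct (Req_dec (det d psi1) 0) as [HD|HD].
  - destruct (det_zero_scal d psi1 HD Hd) as [k Hk].
    assert (k > 0).
    { specialize (Hpsi1 w Hw); change (pairing psi1 w >= 1) in Hpsi1.
      rewrite Hk, pairing_scal_l in Hpsi1; specialize (Hpos w Hw); nra. }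
    intros e He; exists psi1, psi1; split; [exists k; split; [lra|easy]|split; [easy|]].
    apply edist_lt_iff; [easy|]; rewrite dist2_refl; nra.
  - assert (Hint : interior (dual_cone Om) (lin 1 d 1 psi1)).
    { apply interior_lin_pos; try lra; try easy.
      - exact (dual_cone_convex Om).
      - exact (dual_cone_scal Om).
      - now apply antipolar_sub_dual_cone. }
    destruct (interior_dual_cone_coercive Om _ Hint) as [eta [Heta Hcoer]].
    now apply (ray_dist_zero_antipolar Om d (lin 1 d 1 psi1) eta).
Qed.

(** * From (star star) for the antipolar to (star) for Om *)

Lemma interior_antipolar_of_margin (A : pset) a delta :
  0 < delta ->
  (forall psi, A psi -> 1 <= pairing psi a /\ delta * norm2 psi <= (pairing psi a - 1) ^ 2) ->
  interior (antipolar A) a.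
Proof.
  intros Hd Hmargin; apply interior_dist2; exists delta; split; [easy|].
  intros b Hb psi Hpsi; change (pairing b psi >= 1); rewrite pairing_sym.
  destruct (Hmargin psi Hpsi) as [H1 H2].
  pose proof (pairing_sub_sq b a psi) as Hsq; rewrite (pairing_sym b), (pairing_sym a) in Hsq.
  rewrite dist2_sym in Hb; pose proof (norm2_ge0 psi).
  assert (dist2 b a * norm2 psi <= delta * norm2 psi) by (apply Rmult_le_compat_r; lra).
  nra.
Qed.

(* [(snd a, fst a)] and its opposite are the vectors of norm [|a|] that [pairing _ a] kills *)
Lemma near_pairing_kernel u a :
  norm2 u = norm2 a ->
  dist2 (snd a, fst a) u * norm2 a <= 2 * pairing u a ^ 2 \/
  dist2 (- snd a, - fst a) u * norm2 a <= 2 * pairing u a ^ 2.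
Proof.
  intros Hu; set (sg := fst u * snd a + snd u * fst a).
  assert (Hlagrange : sg ^ 2 + pairing u a ^ 2 = norm2 u * norm2 a)
    by (unfold sg, pairing, norm2; ring).
  assert (E1 : dist2 (snd a, fst a) u = norm2 u + norm2 a - 2 * sg)
    by (unfold dist2, sg, norm2; simpl; ring).
  assert (E2 : dist2 (- snd a, - fst a) u = norm2 u + norm2 a + 2 * sg)
    by (unfold dist2, sg, norm2; simpl; ring).
  rewrite Hu in Hlagrange, E1, E2; pose proof (norm2_ge0 a); rewrite E1, E2.
  pose proof (pow2_ge_0 (pairing u a)).
  assert (Hsg : - norm2 a <= sg <= norm2 a) by (split; nra).
  destruct (Rle_or_lt 0 sg); [left|right]; nra.
Qed.

Lemma closed_mem_of_near_either (S : pset) x y :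
  is_closed S ->
  (forall r, 0 < r -> (exists u, S u /\ dist2 x u < r) \/ (exists u, S u /\ dist2 y u < r)) ->
  S x \/ S y.
Proof.
  intros Hcl Hnear; destruct (classic (S x)) as [|Hx]; [now left|right].
  destruct (closed_complement_ball S x Hcl Hx) as [e [He Hfar]].
  apply Hcl, closure_dist2; intros r Hr.
  destruct (Hnear (Rmin r e) (Rmin_pos _ _ Hr He)) as [[u [Hu Hxu]]|[u [Hu Hyu]]].
  - specialize (Hfar u Hu); pose proof (Rmin_r r e); lra.
  - exists u; split; [easy|]; pose proof (Rmin_l r e); lra.
Qed.

Lemma not_dist_zero_of_pairing_gap (X A : pset) a :
  (forall x, X x -> pairing x a = 0) -> (forall psi, A psi -> pairing psi a >= 1) ->
  ~ dist_zero X A.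
Proof.
  intros HX HA Hdz; pose proof (norm2_ge0 a).
  destruct (Hdz (sqrt (/ (norm2 a + 1)))) as [x [psi [Hx [Hpsi Hd]]]].
  { apply sqrt_lt_R0, Rinv_0_lt_compat; lra. }
  apply edist_lt_sqrt in Hd; [|apply Rinv_0_lt_compat; lra].
  pose proof (pairing_sub_sq psi x a) as Hsq; rewrite (HX x Hx), dist2_sym in Hsq.
  specialize (HA psi Hpsi).
  assert (dist2 x psi * norm2 a <= / (norm2 a + 1) * norm2 a) by (apply Rmult_le_compat_r; lra).
  pose proof (div_succ_mul_lt 1 (norm2 a) ltac:(lra) ltac:(lra)); unfold Rdiv in *.
  nra.
Qed.

Lemma antipolar_nearly_orthogonal Om a l :
  prop_i Om -> l > 1 -> (forall psi, antipolar Om psi -> pairing psi a >= l) ->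
  ~ interior Om a ->
  forall e, 0 < e -> exists psi, antipolar Om psi /\ pairing psi a ^ 2 < e * norm2 psi.
Proof.
  intros Hi Hl Hge Hni e He; apply NNPP; intros Hno; apply Hni; rewrite <- (bipolar Om Hi).
  assert (Hl' : 0 < 1 - / l < 1).
  { assert (/ l < 1) by (apply (Rmult_lt_reg_l l); [lra|]; rewrite Rinv_r by lra; lra).
    pose proof (Rinv_0_lt_compat l ltac:(lra)); lra. }
  apply (interior_antipolar_of_margin _ _ (e * (1 - / l) ^ 2)).
  { apply Rmult_lt_0_compat; [easy|]; apply pow_lt; lra. }
  intros psi Hpsi; specialize (Hge psi Hpsi); split; [lra|].
  assert (e * norm2 psi <= pairing psi a ^ 2)
    by (apply Rnot_lt_le; intros Hlt; apply Hno; now exists psi).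
  assert (Hlinv : l * / l = 1) by (field; lra).
  assert (0 <= (1 - / l) * pairing psi a <= pairing psi a - 1) by (split; nra).
  assert ((1 - / l) ^ 2 * pairing psi a ^ 2 <= (pairing psi a - 1) ^ 2) by nra.
  assert (e * norm2 psi * (1 - / l) ^ 2 <= pairing psi a ^ 2 * (1 - / l) ^ 2)
    by (apply Rmult_le_compat_r; [apply pow2_ge_0|easy]).
  lra.
Qed.

Lemma dual_cone_meets_kernel Om a :
  prop_i Om -> a <> (0, 0) ->
  (forall e, 0 < e -> exists psi, antipolar Om psi /\ pairing psi a ^ 2 < e * norm2 psi) ->
  exists w, dual_cone Om w /\ pairing w a = 0 /\ w <> (0, 0).
Proof.
  intros Hi Ha0 Hthin; pose proof (norm2_pos a Ha0) as Ha; pose proof Hi as (Hne & _).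
  (* rescaled to the norm of [a], such functionals approach [(snd a, fst a)] or its opposite *)
  assert (Hnear : forall r, 0 < r ->
            (exists u, dual_cone Om u /\ dist2 (snd a, fst a) u < r) \/
            (exists u, dual_cone Om u /\ dist2 (- snd a, - fst a) u < r)).
  { intros r Hr; destruct (Hthin (r / 2)) as [psi [Hpsi Hlt]]; [lra|].
    pose proof (norm2_pos psi (antipolar_nonzero Om psi Hne Hpsi)) as Hpsi0.
    set (k := sqrt (norm2 a / norm2 psi)).
    assert (Hk : k * k = norm2 a / norm2 psi)
      by (apply sqrt_sqrt; left; now apply Rdiv_lt_0_compat).
    assert (Hnorm : norm2 (scal k psi) = norm2 a).
    { replace (norm2 (scal k psi)) with (k * k * norm2 psi) by (unfold norm2, scal; simpl; ring).
      rewrite Hk; field; lra. }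
    assert (Hpair : pairing (scal k psi) a ^ 2 * 2 < r * norm2 a).
    { rewrite pairing_scal_l.
      replace ((k * pairing psi a) ^ 2) with (k * k * pairing psi a ^ 2) by ring.
      rewrite Hk; apply (Rmult_lt_reg_r (norm2 psi)); [easy|].
      replace (norm2 a / norm2 psi * pairing psi a ^ 2 * 2 * norm2 psi)
        with (2 * norm2 a * pairing psi a ^ 2) by (field; lra).
      nra. }
    assert (Ku : dual_cone Om (scal k psi))
      by (apply dual_cone_scal; [apply sqrt_pos|now apply antipolar_sub_dual_cone]).
    destruct (near_pairing_kernel (scal k psi) a Hnorm) as [Hd|Hd]; [left|right];
      exists (scal k psi); split; try easy; apply (Rmult_lt_reg_r (norm2 a)); lra. }
  destruct (closed_mem_of_near_either _ _ _ (dual_cone_closed Om) Hnear) as [Kw|Kw];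
    (eexists; split; [exact Kw|split; [unfold pairing; simpl; ring|]]);
    intros Hz; injection Hz; intros; apply Ha0; rewrite (pt_eta a); f_equal; lra.
Qed.

Lemma ray_in_kernel_not_dist_zero Om a d w :
  (forall psi, antipolar Om psi -> pairing psi a >= 1) ->
  ray d w -> w <> (0, 0) -> pairing w a = 0 -> ~ dist_zero (ray d) (antipolar Om).
Proof.
  intros Hge [t [_ ->]] Hw0 Hwa; apply (not_dist_zero_of_pairing_gap _ _ a); [|easy].
  rewrite pairing_scal_l in Hwa; assert (Hda : pairing d a = 0).
  { destruct (Rmult_integral _ _ Hwa) as [->|]; [exfalso; apply Hw0; pt_eq|easy]. }
  intros x [t' [_ ->]]; now rewrite pairing_scal_l, Hda, Rmult_0_r.
Qed.

Lemma prop_star_of_starstar_antipolar Om :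
  prop_i Om -> prop_starstar (antipolar Om) -> prop_star Om.
Proof.
  intros Hi Hss; unfold prop_starstar in Hss; rewrite (closure_cone_hull_antipolar Om Hi) in Hss.
  destruct Hss as [d0 [d1 [_ [_ [Hbd [Dz0 Dz1]]]]]].
  intros l Hl a [[s [Hs Ea]] [_ Hni]].
  pose proof Hi as (_ & _ & _ & _ & Hsc).
  assert (Ha : Om a) by (rewrite Ea; now apply scale_stable_mem).
  pose proof (prop_i_nonzero Om a Hi Ha) as Ha0.
  assert (Hge : forall psi, antipolar Om psi -> pairing psi a >= l).
  { intros psi Hpsi; rewrite Ea, pairing_scal_r; specialize (Hpsi s Hs).
    change (pairing psi s >= 1) in Hpsi; nra. }
  destruct (dual_cone_meets_kernel Om a Hi Ha0 (antipolar_nearly_orthogonal Om a l Hi Hl Hge Hni))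
    as [w [Kw [Hwa Hw0]]].
  assert (Bw : boundary (dual_cone Om) w).
  { split; [now apply closure_self|].
    apply (not_interior_of_support _ w a); [|easy|easy]; intros y Hy; now apply Hy. }
  assert (Hge1 : forall psi, antipolar Om psi -> pairing psi a >= 1)
    by (intros psi Hpsi; specialize (Hge psi Hpsi); lra).
  destruct (proj1 (Hbd w) Bw) as [Hw|Hw];
    [now apply (ray_in_kernel_not_dist_zero Om a d0 w)|now apply (ray_in_kernel_not_dist_zero Om a d1 w)].
Qed.

Lemma prop_star_iff_starstar_antipolar Om :
  prop_i Om -> (prop_star Om <-> prop_starstar (antipolar Om)).
Proof.
  intros Hi; split; [|now apply prop_star_of_starstar_antipolar].
  intros Hs; unfold prop_starstar; rewrite (closure_cone_hull_antipolar Om Hi).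
  destruct (cone_boundary_two_rays (dual_cone Om) (dual_cone_closed Om) (dual_cone_convex Om)
              (dual_cone_scal Om) (dual_cone_proper Om Hi) (dual_cone_nontrivial Om Hi))
    as [d0 [d1 [N0 [N1 Hbd]]]].
  assert (Hself : forall d, ray d d) by (intros d; exists 1; split; [lra|pt_eq]).
  exists d0, d1; split; [easy|split; [easy|split; [exact Hbd|split]]];
    apply boundary_dual_cone_dist_zero; try easy; apply Hbd; [left|right]; apply Hself.
Qed.

Theorem theorem4 (Om : pset) :
  prop_i Om ->
  (prop_star Om <-> prop_starstar (antipolar Om)) /\
  (prop_star (antipolar Om) <-> prop_starstar Om).
Proof.
  intros Hi; split; [now apply prop_star_iff_starstar_antipolar|].
  rewrite <- (bipolar Om Hi) at 2.
  now apply prop_star_iff_starstar_antipolar, antipolar_prop_i.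
Qed.
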